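(* Let $E$ be a finite directed graph and $X\subseteq\mathrm{Sink}(E)\cup\mathrm{Source}(E)$. Then $\mathrm{h}_{\mathrm{alg}}(KE)=\mathrm{h}_{\mathrm{alg}}(K(E\setminus X))$.
   Context: For a finite directed graph $E=(E^0,E^1,s,r)$, a sink is a vertex $v$ with $s^{-1}(v)=\emptyset$ and a source is a vertex $v$ with $r^{-1}(v)=\emptyset$. $E\setminus X$ is the graph with vertex set $E^0\setminus X$ and edge set $E^1$ minus all edges having source or range in $X$. The path algebra $KF$ has basis the paths of $F$ (vertices as length-0 paths) with concatenation product; standard filtration $V_n=$ span of paths of length $\le n$; $\mathrm{h}_{\mathrm{alg}}(KF)=0$ if $KF$ is finite-dimensional and $\limsup_n\frac1n\log\dim(V_n/V_{n-1})$ otherwise. *)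

From HB Require Import structures.
From mathcomp Require Import all_boot all_order all_algebra.
From mathcomp Require Import all_classical all_reals all_analysis.
Set Implicit Arguments. Unset Strict Implicit. Unset Printing Implicit Defensive.
Import Order.TTheory GRing.Theory Num.Theory.
Local Open Scope ring_scope.

Record graph := Graph {
  vert : finType;
  edge : finType;
  src : edge -> vert;
  rng : edge -> vert }.

Definition is_sink (E : graph) (v : vert E) : Prop := forall e : edge E, src e <> v.
Definition is_source (E : graph) (v : vert E) : Prop := forall e : edge E, rng e <> v.

Section Remove.
Variables (E : graph) (X : {set vert E}).
Definition rem_vert := {v : vert E | v \notin X}.
Definition rem_edge := {e : edge E | (src e \notin X) && (rng e \notin X)}.
Definition rem_src (e : rem_edge) : rem_vert :=
  exist _ (src (sval e)) (proj1 (andP (proj2_sig e))).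
Definition rem_rng (e : rem_edge) : rem_vert :=
  exist _ (rng (sval e)) (proj2 (andP (proj2_sig e))).
End Remove.

Definition graph_remove (E : graph) (X : {set vert E}) : graph :=
  @Graph (rem_vert X) (rem_edge X) (@rem_src E X) (@rem_rng E X).

(* Paths of length n >= 1: e_1 ... e_n with r(e_i) = s(e_{i+1}) (concatenation
   convention of the path algebra).  Paths of length 0 are the vertices. *)
Definition is_path (E : graph) (n : nat) (t : n.-tuple (edge E)) : bool :=
  [forall i : 'I_n, (i.+1 < n)%N ==>
     (rng (tnth t i) == src (nth (tnth t i) t i.+1))].

(* number of paths of length exactly n = dim (V_n / V_{n-1}) in the path
   algebra KE, since the paths form a basis compatible with the filtration. *)
Definition npaths (E : graph) (n : nat) : nat :=
  if n is 0 then #|vert E|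
  else #|[set t : n.-tuple (edge E) | is_path t]|.

(* KE is finite-dimensional iff it has only finitely many paths
   (the paths form a basis). *)
Definition path_alg_findim (E : graph) : Prop :=
  exists N : nat, forall n, (N <= n)%N -> npaths E n = 0%N.

Definition halg (R : realType) (E : graph) : \bar R :=
  if `[< path_alg_findim E >] then 0%E
  else limn_esup (fun n : nat => ((ln (npaths E n)%:R : R) / n%:R)%:E).

From HB Require Import structures.
From mathcomp Require Import all_boot all_order all_algebra.
From mathcomp Require Import all_classical all_reals all_analysis.
Set Implicit Arguments. Unset Strict Implicit. Unset Printing Implicit Defensive.
Import Order.TTheory GRing.Theory Num.Theory.
Local Open Scope ring_scope.

(* A path of E \ X is a path of E.  Conversely, deleting the first and the
   last edge of a path of E leaves a path of E \ X: each of its vertices is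
   the range of one edge and the source of another, so it is neither a sink
   nor a source.  Thus the path counts p' of E \ X and p of E satisfy
   p'_n <= p_n and p_(n+2) <= |E^1|^2 p'_n, and such mutual domination
   preserves both finite-dimensionality and the limsup of (log p_n) / n. *)

Section tuple_inner.
Variable T : Type.

Definition tinner m (t : m.+2.-tuple T) : m.-tuple T :=
  [tuple tnth t (lift ord0 (lift ord_max i)) | i < m].

Lemma ends_tinner_inj m :
  injective (fun t : m.+2.-tuple T => (thead t, tnth t ord_max, tinner t)).
Proof.
move=> t1 t2 [t12_0 t12_max t12_inner_val].
have t12_inner : tinner t1 = tinner t2 by apply: val_inj.
apply: eq_from_tnth => j; case: (unliftP ord0 j) => [j'|] -> //.
case: (unliftP ord_max j') => [i|] ->.
  by have := congr1 (fun s => tnth s i) t12_inner; rewrite !tnth_mktuple.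
by rewrite (_ : lift ord0 ord_max = ord_max) //; apply: val_inj.
Qed.

End tuple_inner.

Lemma is_pathP (E : graph) n (t : n.-tuple (edge E)) :
  reflect (forall i j : 'I_n, j = i.+1 :> nat ->
             rng (tnth t i) = src (tnth t j))
          (is_path t).
Proof.
apply: (iffP forallP) => [tP i j ji | tP i]; last first.
  apply/implyP => Si; apply/eqP.
  by rewrite (tP i (Ordinal Si)) // (tnth_nth (tnth t i) t (Ordinal Si)).
have /implyP := tP i; rewrite -ji ltn_ord (tnth_nth (tnth t i) t j).
by move=> /(_ isT)/eqP.
Qed.

Section removal.
Variables (E : graph) (X : {set vert E}).

Definition avoids (e : edge E) := (src e \notin X) && (rng e \notin X).

Definition paths_avoiding n :=
  [set t : n.-tuple (edge E) | is_path t && all avoids t].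

Lemma is_path_remove n (t : n.-tuple (edge (graph_remove X))) :
  is_path t = is_path (map_tuple sval t).
Proof.
apply/is_pathP/is_pathP => tP i j ji; rewrite ?tnth_map.
- by have /(congr1 val) := tP i j ji.
- by apply: val_inj; have := tP i j ji; rewrite !tnth_map.
Qed.

Lemma npaths_remove n : npaths (graph_remove X) n.+1 = #|paths_avoiding n.+1|.
Proof.
have val_tuple_inj :
    injective (fun t : n.+1.-tuple (edge (graph_remove X)) => map_tuple sval t).
  by move=> t1 t2 /(congr1 val) /(inj_map val_inj) /val_inj.
rewrite /= -(card_imset _ val_tuple_inj); apply: eq_card => t; rewrite !inE.
apply/imsetP/andP => [[t' + ->] | [tP /all_tnthP tX]].
  rewrite inE is_path_remove => ->; split=> //; apply/all_tnthP => i.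
  by rewrite tnth_map; exact: (valP (tnth t' i)).
pose t' : n.+1.-tuple (edge (graph_remove X)) :=
  [tuple exist _ (tnth t i) (tX i) | i < n.+1].
have tE : t = map_tuple sval t'.
  by apply: eq_from_tnth => i; rewrite tnth_map tnth_mktuple.
by exists t'; rewrite // inE is_path_remove -tE.
Qed.

Lemma npaths_remove_le n : (npaths (graph_remove X) n.+1 <= npaths E n.+1)%N.
Proof.
rewrite npaths_remove subset_leq_card //.
by apply/fintype.subsetP => t; rewrite !inE => /andP[].
Qed.

Hypothesis X_sink_source : forall v, v \in X -> is_sink v \/ is_source v.

Lemma inner_vertex_notin (e f : edge E) : rng e = src f -> src f \notin X.
Proof. by move=> ef; apply/negP => /X_sink_source [/(_ f) | /(_ e)]. Qed.

Lemma tinner_avoiding m (t : m.+3.-tuple (edge E)) :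
  is_path t -> tinner t \in paths_avoiding m.+1.
Proof.
move=> /is_pathP tP; rewrite inE; apply/andP; split.
  apply/is_pathP => i j ji; rewrite !tnth_mktuple; apply: tP.
  by rewrite !lift0 !lift_max ji.
apply/all_tnthP => i; rewrite tnth_mktuple /avoids.
set k := lift ord0 (lift ord_max i).
have kE : k = i.+1 :> nat by rewrite lift0 lift_max.
have prevP : (i < m.+3)%N by rewrite (leq_trans (ltn_ord i)) // leqW.
have nextP : (i.+2 < m.+3)%N by exact: ltn_ord i.
have prev_k : rng (tnth t (Ordinal prevP)) = src (tnth t k) by apply: tP.
have k_next : rng (tnth t k) = src (tnth t (Ordinal nextP)).
  by apply: tP; rewrite kE.
by rewrite (inner_vertex_notin prev_k) k_next (inner_vertex_notin k_next).
Qed.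

Lemma npaths_le_remove m :
  (npaths E m.+3 <= #|edge E| ^ 2 * npaths (graph_remove X) m.+1)%N.
Proof.
rewrite npaths_remove /= -(card_imset _ (@ends_tinner_inj _ m.+1)).
rewrite -mulnn -!cardsT -!cardsX subset_leq_card //.
apply/fintype.subsetP => _ /imsetP[t + ->]; rewrite !inE /=.
by move=> /tinner_avoiding; rewrite inE.
Qed.

End removal.

Local Open Scope classical_set_scope.

Section limn_esup_comparison.
Variable R : realType.
Implicit Types u v : (\bar R)^nat.
Local Open Scope ereal_scope.

Lemma le_limn_esup u v :
  (\forall n \near \oo, u n <= v n) -> limn_esup u <= limn_esup v.
Proof.
move=> [N _ uv]; rewrite !limn_esup_lim.
apply: lee_lim; [exact: is_cvg_esups | exact: is_cvg_esups |].
near=> n; apply: ge_ereal_sup => _ [k /= nk <-].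
apply: le_trans (uv k _) _; last by apply: ereal_sup_ubound; exists k.
by rewrite /= (leq_trans _ nk) //; near: n; exists N.
Unshelve. all: by end_near. Qed.

Lemma limn_esup_shift u (l : \bar R) : l \is a fin_num ->
  limn_esup (fun n => l + u n) = l + limn_esup u.
Proof.
move=> lfin; rewrite -[LHS]oppeK -limn_einfN.
have -> : -%E \o (fun n => l + u n) = (fun n => - l + (-%E \o u) n).
  by apply/funext => n /=; rewrite oppeD ?fin_num_adde_defr.
rewrite limn_einf_shift ?fin_numN // limn_einfN.
by rewrite oppeD ?fin_num_adde_defr ?oppeK // fin_numN.
Qed.

Lemma limn_esup_shiftn u k : limn_esup (fun n => u (n + k)%N) = limn_esup u.
Proof.
rewrite !limn_esup_lim.
have -> : esups (fun n => u (n + k)%N) = (fun n => esups u (n + k)%N).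
  apply/funext => n; congr ereal_sup; apply/seteqP; split => _ [m /= nm <-].
    by exists (m + k)%N; rewrite //= leq_add2r.
  exists (m - k)%N; last by rewrite subnK // (leq_trans (leq_addl n k)).
  by rewrite /= leq_subRL ?(leq_trans (leq_addl n k)) // addnC.
by apply/cvg_lim => //; rewrite (cvg_shiftn k (esups u)); exact: is_cvg_esups.
Qed.

Lemma limn_esup_le_eps u v :
  (forall e : R, (0 < e)%R -> \forall n \near \oo, u n <= v n + e%:E) ->
  limn_esup u <= limn_esup v.
Proof.
move=> uv; apply/lee_addgt0Pr => e e0; rewrite addeC -limn_esup_shift //.
by apply: le_limn_esup; apply: filterS (uv e e0) => n; rewrite addeC.
Qed.

End limn_esup_comparison.

Definition dominated (p q : nat -> nat) :=
  exists C k, \forall n \near \oo, (p (n + k) <= C * q n)%N.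

Lemma eventually0_dominated p q : dominated p q ->
  (\forall n \near \oo, q n = 0%N) -> \forall n \near \oo, p n = 0%N.
Proof.
move=> [C [k [N _ pq]]] [M _ q0]; exists (maxn N M + k)%N => // n /= Nn.
have [m nE] : exists m, n = (m + k)%N.
  by exists (n - k)%N; rewrite subnK // (leq_trans (leq_addl _ _) Nn).
move: Nn; rewrite nE leq_add2r geq_max => /andP[Nm Mm].
by apply/eqP; rewrite -leqn0 -(muln0 C) -(q0 m Mm) pq.
Qed.

Section growth_rate.
Variable R : realType.

Lemma ln_nat_ge0 k : 0 <= ln (k%:R : R).
Proof. by case: k => [|k]; [rewrite ln0 | rewrite ln_ge0 // ler1n]. Qed.

Lemma ler_ln_nat a b : (a <= b)%N -> ln (a%:R : R) <= ln b%:R.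
Proof.
case: a => [|a] ab; first by rewrite ln0 // ln_nat_ge0.
by rewrite ler_ln ?posrE ?ltr0n ?ler_nat // (leq_trans _ ab).
Qed.

Lemma ln_natM_le a b : ln ((a * b)%:R : R) <= ln a%:R + ln b%:R.
Proof.
case: a => [|a]; first by rewrite mul0n ln0 // add0r ln_nat_ge0.
case: b => [|b]; first by rewrite muln0 ln0 // addr0 ln_nat_ge0.
by rewrite natrM lnM ?posrE ?ltr0n.
Qed.

Definition growth_rate (p : nat -> nat) : \bar R :=
  limn_esup (fun n => (ln (p n)%:R / n%:R)%:E).

Lemma le_growth_rate p q :
  dominated p q -> (growth_rate p <= growth_rate q)%E.
Proof.
move=> [C [k pq]]; rewrite /growth_rate -(limn_esup_shiftn _ k).
apply: limn_esup_le_eps => e e0; near=> n.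
have n0 : (0 < n)%N by near: n; exists 1%N.
have lnp_le : ln (p (n + k))%:R <= ln C%:R + ln (q n)%:R :> R.
  by apply: le_trans (ln_natM_le C (q n)); apply: ler_ln_nat; near: n.
have lnC_le : ln C%:R / n%:R <= e.
  rewrite ler_pdivrMr ?ltr0n // mulrC -ler_pdivrMr // ltW //.
  by near: n; apply: nbhs_infty_gtr.
rewrite -EFinD lee_fin addrC.
apply: le_trans (_ : (ln C%:R + ln (q n)%:R) / n%:R <= _); last first.
  by rewrite mulrDl lerD2r.
apply: le_trans (_ : ln (p (n + k))%:R / n%:R <= _).
  rewrite ler_wpM2l ?ln_nat_ge0 // lef_pV2 ?posrE ?ltr0n ?addn_gt0 ?n0 //.
  by rewrite ler_nat leq_addr.
by rewrite ler_wpM2r ?invr_ge0.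
Unshelve. all: by end_near. Qed.

End growth_rate.

Lemma path_alg_findimE E :
  path_alg_findim E <-> \forall n \near \oo, npaths E n = 0%N.
Proof. by split=> [[N EN]|[N _ EN]]; exists N. Qed.

Lemma eq_halg R E F : dominated (npaths E) (npaths F) ->
  dominated (npaths F) (npaths E) -> halg R E = halg R F.
Proof.
move=> EF FE; rewrite /halg (asbool_equiv_eq (_ : _ <-> path_alg_findim F)).
  by case: ifP => // _; apply/le_anti; rewrite !le_growth_rate.
by rewrite !path_alg_findimE; split; apply: eventually0_dominated.
Qed.

Theorem corollary5p5 (R : realType) (E : graph) (X : {set vert E}) :
  (forall v, v \in X -> is_sink v \/ is_source v) ->
  halg R E = halg R (graph_remove X).
Proof.
move=> X_sink_source; apply: eq_halg.
  exists (#|edge E| ^ 2)%N, 2%N; exists 1%N => // -[|m] _ //.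
  by rewrite addn2; exact: npaths_le_remove.
exists 1%N, 0%N; exists 1%N => // -[|n] _ //.
by rewrite addn0 mul1n; exact: npaths_remove_le.
Qed.
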